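(* Let $\mathcal{N}$ be a ReLU network with widths $n_0,\dots,n_L$ and let $X=[x^{(1)},\dots,x^{(m)}]\in\mathbb{R}^{n_0\times m}$ be a fixed dataset whose $m$ columns are affinely independent. Fix an activation pattern $A$ and let $\mathbf{A}=[A,\dots,A]$ (all points assigned the pattern $A$). Let $n^A_\ell=|\{i: A^\ell_i=1\}|$. Then the image $\{F^{\mathbf{A}}_X(\theta):\theta\in\mathbb{R}^{d_{\operatorname{par}}}\}\subseteq\mathbb{R}^{n_L\times m}$ coincides with the image $\{G_X(\theta'):\theta'\}$ of the fully connected linear network $\mathcal{L}$ with widths $n_0,n_1^A,\dots,n^A_{L-1},n_L$.
   Context: A ReLU network with widths $n_0,\dots,n_L$ has parameters $\theta=(W^{(\ell)},b^{(\ell)})_{\ell=1}^L$ with $W^{(\ell)}\in\mathbb{R}^{n_\ell\times n_{\ell-1}}$, $b^{(\ell)}\in\mathbb{R}^{n_\ell}$. An activation pattern is $A=(A^1,\dots,A^{L-1})$ with $A^\ell\in\{0,1\}^{n_\ell}$. For such $A$, $f^A_\theta(x)=W^{(L)}\big(W^{(L-1)}_A(\cdots(W^{(1)}_Ax+b^{(1)}_A)\cdots)+b^{(L-1)}_A\big)+b^{(L)}$ where $W^{(\ell)}_A=\operatorname{diag}(A^\ell)W^{(\ell)}$, $b^{(\ell)}_A=\operatorname{diag}(A^\ell)b^{(\ell)}$, and $F^{\mathbf{A}}_X(\theta)=[f^A_\theta(x^{(1)}),\dots,f^A_\theta(x^{(m)})]$. The fully connected linear network with widths $k_0,\dots,k_L$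 has parameters $\theta'=(V^{(\ell)},c^{(\ell)})$, $V^{(\ell)}\in\mathbb{R}^{k_\ell\times k_{\ell-1}}$, $c^{(\ell)}\in\mathbb{R}^{k_\ell}$, and computes $h_{\theta'}(x)=V^{(L)}(\cdots(V^{(1)}x+c^{(1)})\cdots)+c^{(L)}$; $G_X(\theta')=[h_{\theta'}(x^{(1)}),\dots,h_{\theta'}(x^{(m)})]$. *)

From mathcomp Require Import all_boot all_order all_algebra.
From mathcomp Require Import reals.
Set Implicit Arguments. Unset Strict Implicit. Unset Printing Implicit Defensive.
Import Order.TTheory GRing.Theory Num.Theory.
Local Open Scope ring_scope.

(* Layers are 0-indexed in the parameter families: layer l+1 of the paper
   has weight W l : 'M_(w l.+1, w l) and bias b l : 'cV_(w l.+1).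
   Widths: w 0 = n_0, ..., w L = n_L.  Only l < L is ever used. *)

(* diag(A^l) for an activation pattern given as the set {i | A^l_i = 1} *)
Definition pat_mx (R : nzRingType) n (S : {set 'I_n}) : 'M[R]_n :=
  diag_mx (\row_i (i \in S)%:R).

Section Nets.
Variable R : nzRingType.
Variable w : nat -> nat.
Variable W : forall l, 'M[R]_(w l.+1, w l).
Variable b : forall l, 'cV[R]_(w l.+1).

(* hidden state of the pattern-fixed ReLU network after k layers
   (the masks diag(A^1),...,diag(A^k) applied) *)
Fixpoint pat_hid (A : forall l, {set 'I_(w l)}) (x : 'cV[R]_(w 0)) (k : nat)
  : 'cV[R]_(w k) :=
  match k with
  | 0 => x
  | k'.+1 => @pat_mx R _ (A k'.+1) *m (W k' *m pat_hid A x k' + b k')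
  end.

(* f^A_theta(x) for an L-layer network (output layer has no mask) *)
Definition relu_fA (L : nat) (A : forall l, {set 'I_(w l)}) (x : 'cV[R]_(w 0))
  : 'cV[R]_(w L) :=
  match L return 'cV[R]_(w L) with
  | 0 => x
  | L'.+1 => W L' *m pat_hid A x L' + b L'
  end.

Definition relu_FA (L : nat) (A : forall l, {set 'I_(w l)}) m (X : 'M[R]_(w 0, m))
  : 'M[R]_(w L, m) :=
  \matrix_(i, j) relu_fA L A (col j X) i 0.

Fixpoint lin_hid (x : 'cV[R]_(w 0)) (k : nat) : 'cV[R]_(w k) :=
  match k with
  | 0 => x
  | k'.+1 => W k' *m lin_hid x k' + b k'
  end.

Definition lin_h (L : nat) (x : 'cV[R]_(w 0)) : 'cV[R]_(w L) := lin_hid x L.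

Definition lin_G (L : nat) m (X : 'M[R]_(w 0, m)) : 'M[R]_(w L, m) :=
  \matrix_(i, j) lin_h L (col j X) i 0.
End Nets.

Definition affinely_independent (R : nzRingType) n m (X : 'M[R]_(n, m)) : Prop :=
  forall c : 'cV[R]_m, \sum_j c j 0 = 0 -> X *m c = 0 -> c = 0.

From mathcomp Require Import all_boot all_order all_algebra.
From mathcomp Require Import reals.
Set Implicit Arguments. Unset Strict Implicit.
Import GRing.Theory Num.Theory.
Local Open Scope ring_scope.

(* With the pattern fixed, the ReLU network is an affine network whose hidden
   layers are masked by D_l = diag(A^l).  Write D_l = P_l^T P_l with P_l the
   n^A_l x n_l matrix selecting the active coordinates, so that P_l P_l^T = 1,
   and let P_0, P_L be identities.  Conjugating the parameters,
   W_l |-> P_(l+1) W_l P_l^T and b_l |-> P_(l+1) b_l, turns a pattern network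
   into a narrow linear network computing the same outputs, and
   V_l |-> P_(l+1)^T V_l P_l goes back. *)

(* [k] is a separate parameter because the widths of the narrow network are
   only propositionally equal to the cardinalities #|A l|. *)
Definition selmx (R : nzRingType) n k (S : {set 'I_n}) : 'M[R]_(k, n) :=
  \matrix_(i, j) ((j \in S) && (index j (enum S) == i))%:R.

Arguments selmx R {n} k S.

Section SelectionMatrix.
Variables (R : nzRingType) (n k : nat) (S : {set 'I_n}).
Hypothesis cardS : k = #|S|.

Lemma selmx_mul_tr : selmx R k S *m (selmx R k S)^T = 1%:M.
Proof.
apply/matrixP => i i'; rewrite !mxE.
have i_lt : (i < size (enum S))%N by rewrite -cardE -cardS.
pose j0 := nth (enum_default (cast_ord cardS i)) (enum S) i.
have j0S : j0 \in S by rewrite -mem_enum mem_nth.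
have j0_idx : index j0 (enum S) = i by rewrite index_uniq ?enum_uniq.
rewrite (bigD1 j0) //= big1 ?addr0 => [|j j_neq].
  by rewrite !mxE j0S j0_idx eqxx mul1r.
rewrite !mxE; case jS: (j \in S); last by rewrite mul0r.
case: eqP => [j_idx|]; last by rewrite mul0r.
by move/eqP: j_neq; rewrite /j0 -j_idx nth_index ?mem_enum.
Qed.

Lemma tr_selmx_mul : (selmx R k S)^T *m selmx R k S = pat_mx R S.
Proof.
apply/matrixP => j j'; rewrite !mxE.
case jS: (j \in S); last by rewrite mul0rn big1 // => i _; rewrite !mxE jS mul0r.
have idx_lt : (index j (enum S) < k)%N by rewrite cardS cardE index_mem mem_enum.
rewrite (bigD1 (Ordinal idx_lt)) //= big1 ?addr0 => [|i i_neq]; last first.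
  rewrite !mxE jS /=; case: eqP => [idx_i|]; last by rewrite mul0r.
  by case/eqP: i_neq; apply: val_inj.
rewrite !mxE jS eqxx mul1r /= mulr1n.
case: (j =P j') => [<-|j_neq]; first by rewrite jS eqxx.
case j'S: (j' \in S) => //=; case: eqP => // same_idx.
have j_enum : j \in enum S by rewrite mem_enum.
by case: j_neq; rewrite -(nth_index j j_enum) -same_idx nth_index ?mem_enum.
Qed.

End SelectionMatrix.

Lemma selmx_setT (R : nzRingType) n : selmx R n [set: 'I_n] = 1%:M.
Proof.
by apply/matrixP => i j; rewrite !mxE in_setT enum_setT -enumT index_enum_ord eq_sym.
Qed.

Lemma pat_mx_setT (R : nzRingType) n : pat_mx R [set: 'I_n] = 1%:M.
Proof. by apply/matrixP => i j; rewrite !mxE in_setT. Qed.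

Lemma castmx_rows_selmx (R : nzRingType) k n m (e : k = n) (X : 'M[R]_(n, m)) :
  castmx (esym e, erefl m) X = selmx R k [set: 'I_n] *m X.
Proof. by case: n / e X => X; rewrite castmx_id selmx_setT mul1mx. Qed.

Lemma castmx_rows_tr_selmx (R : nzRingType) k n m (e : k = n) (M : 'M[R]_(k, m)) :
  castmx (e, erefl m) M = (selmx R k [set: 'I_n])^T *m M.
Proof. by case: n / e => /=; rewrite castmx_id selmx_setT trmx1 mul1mx. Qed.

Lemma mulmx_colwise (R : nzRingType) p q m (M : 'M[R]_(q, p)) (g : 'I_m -> 'cV[R]_p) :
  M *m (\matrix_(i, j) g j i 0) = \matrix_(i, j) (M *m g j) i 0.
Proof. by apply/matrixP => i j; rewrite !mxE; apply: eq_bigr => r _; rewrite !mxE. Qed.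

Section Conjugation.
Variables (R : nzRingType) (w k : nat -> nat) (L : nat).
Variable A : forall l, {set 'I_(w l)}.
Variable P : forall l, 'M[R]_(k l, w l).
Hypothesis tr_P0_mul : (P 0)^T *m P 0 = 1%:M.
Hypothesis tr_Pout_mul : (P L.+1)^T *m P L.+1 = 1%:M.
Hypothesis P_mul_tr : forall l, (l <= L)%N -> P l *m (P l)^T = 1%:M.
Hypothesis tr_P_mul : forall l, (0 < l <= L)%N -> (P l)^T *m P l = pat_mx R (A l).

Definition restrict_W (W : forall l, 'M[R]_(w l.+1, w l)) l : 'M[R]_(k l.+1, k l) :=
  P l.+1 *m W l *m (P l)^T.
Definition restrict_b (b : forall l, 'cV[R]_(w l.+1)) l : 'cV[R]_(k l.+1) :=
  P l.+1 *m b l.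
Definition extend_W (V : forall l, 'M[R]_(k l.+1, k l)) l : 'M[R]_(w l.+1, w l) :=
  (P l.+1)^T *m V l *m P l.
Definition extend_b (c : forall l, 'cV[R]_(k l.+1)) l : 'cV[R]_(w l.+1) :=
  (P l.+1)^T *m c l.

Lemma pat_hid_restrict W b x l : (l <= L)%N ->
  pat_hid W b A x l =
  (P l)^T *m lin_hid (restrict_W W) (restrict_b b) (P 0 *m x) l.
Proof.
elim: l => [|l IH] l_le /=; first by rewrite mulmxA tr_P0_mul mul1mx.
rewrite IH ?(ltnW l_le) // -tr_P_mul //.
by rewrite /restrict_W /restrict_b !mulmxDr !mulmxA.
Qed.

Lemma extend_W_mul_tr V l (y : 'cV[R]_(k l)) : (l <= L)%N ->
  extend_W V l *m ((P l)^T *m y) = (P l.+1)^T *m (V l *m y).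
Proof.
move=> l_le; rewrite /extend_W -mulmxA (mulmxA (P l)) P_mul_tr //.
by rewrite mul1mx mulmxA.
Qed.

Lemma pat_hid_extend V c x l : (l <= L)%N ->
  pat_hid (extend_W V) (extend_b c) A x l = (P l)^T *m lin_hid V c (P 0 *m x) l.
Proof.
elim: l => [|l IH] l_le /=; first by rewrite mulmxA tr_P0_mul mul1mx.
rewrite IH ?(ltnW l_le) // extend_W_mul_tr ?(ltnW l_le) // -mulmxDr -tr_P_mul //.
by rewrite -mulmxA (mulmxA (P l.+1)) P_mul_tr // mul1mx.
Qed.

Lemma relu_fA_restrict W b x :
  relu_fA W b L.+1 A x =
  (P L.+1)^T *m lin_h (restrict_W W) (restrict_b b) L.+1 (P 0 *m x).
Proof.
rewrite /lin_h /= pat_hid_restrict // /restrict_W /restrict_b.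
by rewrite -!mulmxA -mulmxDr [RHS]mulmxA tr_Pout_mul mul1mx.
Qed.

Lemma relu_fA_extend V c x :
  relu_fA (extend_W V) (extend_b c) L.+1 A x =
  (P L.+1)^T *m lin_h V c L.+1 (P 0 *m x).
Proof. by rewrite /lin_h /= pat_hid_extend // extend_W_mul_tr // -mulmxDr. Qed.

Lemma relu_FA_restrict W b m (X : 'M[R]_(w 0, m)) :
  relu_FA W b L.+1 A X =
  (P L.+1)^T *m lin_G (restrict_W W) (restrict_b b) L.+1 (P 0 *m X).
Proof.
rewrite mulmx_colwise; apply/matrixP => i j.
by rewrite [LHS]mxE [RHS]mxE [in RHS]colE -mulmxA -colE relu_fA_restrict.
Qed.

Lemma relu_FA_extend V c m (X : 'M[R]_(w 0, m)) :
  relu_FA (extend_W V) (extend_b c) L.+1 A X =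
  (P L.+1)^T *m lin_G V c L.+1 (P 0 *m X).
Proof.
rewrite mulmx_colwise; apply/matrixP => i j.
by rewrite [LHS]mxE [RHS]mxE [in RHS]colE -mulmxA -colE relu_fA_extend.
Qed.

End Conjugation.

Theorem lemma2p3 (R : realType) (L : nat) (w : nat -> nat) (m : nat)
    (X : 'M[R]_(w 0, m)) (A : forall l, {set 'I_(w l)})
    (k : nat -> nat) (ek0 : k 0 = w 0) (ekL : k L = w L) :
  (0 < L)%N ->
  affinely_independent X ->
  (forall l, (0 < l < L)%N -> k l = #|A l|) ->
  forall Y : 'M[R]_(w L, m),
    (exists (W : forall l, 'M[R]_(w l.+1, w l)) (b : forall l, 'cV[R]_(w l.+1)),
        relu_FA W b L A X = Y)
    <->
    (exists (V : forall l, 'M[R]_(k l.+1, k l)) (c : forall l, 'cV[R]_(k l.+1)),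
        castmx (ekL, erefl m) (lin_G V c L (castmx (esym ek0, erefl m) X)) = Y).
Proof.
case: L ekL => [//|L] ekL _ _ cardA Y.
pose S l := if (0 < l <= L)%N then A l else [set: 'I_(w l)].
pose P l := selmx R (k l) (S l).
have S_out : S L.+1 = setT by rewrite /S ltnn andbF.
have cardS l : (l <= L.+1)%N -> k l = #|S l|.
  rewrite /S leq_eqVlt => /orP[/eqP->|]; first by rewrite ltnn andbF cardsT card_ord ekL.
  case: l => [|l] l_lt; first by rewrite cardsT card_ord ek0.
  by rewrite ltnS in l_lt; rewrite l_lt cardA.
have tr_P_mul l : (0 < l <= L)%N -> (P l)^T *m P l = pat_mx R (A l).
  move=> l_hid; have l_le : (l <= L.+1)%N by case/andP: l_hid => _ /leqW.
  by rewrite (tr_selmx_mul _ (cardS l l_le)) /S l_hid.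
have P_mul_tr l : (l <= L)%N -> P l *m (P l)^T = 1%:M.
  by move=> l_le; rewrite (selmx_mul_tr _ (cardS l (leqW l_le))).
have tr_P0_mul : (P 0)^T *m P 0 = 1%:M.
  by rewrite (tr_selmx_mul _ (cardS 0 isT)) pat_mx_setT.
have tr_Pout_mul : (P L.+1)^T *m P L.+1 = 1%:M.
  by rewrite (tr_selmx_mul _ (cardS _ (leqnn _))) S_out pat_mx_setT.
have lin_G_cast V c : castmx (ekL, erefl m) (lin_G V c L.+1 (castmx (esym ek0, erefl m) X))
    = (P L.+1)^T *m lin_G V c L.+1 (P 0 *m X).
  by rewrite castmx_rows_tr_selmx castmx_rows_selmx -S_out.
split=> [[W [b <-]]|[V [c <-]]].
- exists (restrict_W P W), (restrict_b P b); rewrite lin_G_cast.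
  exact/esym/(relu_FA_restrict tr_P0_mul tr_Pout_mul tr_P_mul).
- exists (extend_W P V), (extend_b P c); rewrite lin_G_cast.
  exact: (relu_FA_extend tr_P0_mul P_mul_tr tr_P_mul).
Qed.
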